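(* Let $k\le l$ be positive integers with $\gcd(k,l)=1$, let $n\ge1$ and $m\ge 0$ be integers, and write $m=qn+r$ with integers $q\ge 0$, $0\le r<n$. If $\frac{n}{q+2}\le r\le \frac{nk}{k+l}$, then $L^{k,l}(m,n)=nkq+r(k+l)$. If $r\ge \frac{nk}{k+l}$, then $L^{k,l}(m,n)=nk(q+1)$.
   Context: $\mathcal D^{k,l}(m,n)$ denotes the set of all $nk\times nl$ matrices with nonnegative integer entries all of whose row sums equal $ml$ and all of whose column sums equal $mk$. For an $s\times t$ matrix $A=(a_{ij})$ with $s\le t$, a transversal of $A$ is a set of entries $T=\{a_{1i_1},\dots,a_{si_s}\}$ with $i_1,\dots,i_s\in\{1,\dots,t\}$ pairwise distinct, and $|T|=a_{1i_1}+\cdots+a_{si_s}$; if $s>t$, the transversals of $A$ are those of its transpose. The tropical determinant is ${\rm tdet}(A)=\max_T|T|$, and $L^{k,l}(m,n)=\min_{A\in\mathcal D^{k,l}(m,n)}{\rm tdet}(A)$. *)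

From mathcomp Require Import all_boot all_order all_algebra.
Set Implicit Arguments. Unset Strict Implicit. Unset Printing Implicit Defensive.

(* For s <= t a transversal is given by
   an injective map from rows to columns; for s > t we use the transpose,
   i.e. an injective map from columns to rows. *)
Definition tdet (s t : nat) (A : 'M[nat]_(s, t)) : nat :=
  if s <= t then
    \max_(f : {ffun 'I_s -> 'I_t} | injectiveb f) \sum_(i < s) A i (f i)
  else
    \max_(f : {ffun 'I_t -> 'I_s} | injectiveb f) \sum_(j < t) A (f j) j.

Arguments tdet : clear implicits.
Definition inD (k l m n : nat) (A : 'M[nat]_(n * k, n * l)) : Prop :=
  (forall i, \sum_(j < n * l) A i j = m * l) /\
  (forall j, \sum_(i < n * k) A i j = m * k).

Arguments inD : clear implicits.
Definition is_L (k l m n v : nat) : Prop :=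
  (exists A : 'M[nat]_(n * k, n * l), inD k l m n A /\ tdet _ _ A = v) /\
  (forall A : 'M[nat]_(n * k, n * l), inD k l m n A -> v <= tdet _ _ A).

From mathcomp Require Import all_boot all_order all_algebra.
From mathcomp Require Import zify.
Set Implicit Arguments. Unset Strict Implicit. Unset Printing Implicit Defensive.

(* For [s <= t], the maximum weight of a transversal of an [s x t] matrix over
   [nat] equals the minimum weight [sum u + sum v] of a cover
   [a_ij <= u_i + v_j] (Egervary).  For [A] in D^{k,l}(m,n), comparing the
   row sum [ml] through a row with minimal [u_i] and the column sum [mk]
   through a column with minimal [v_j] against the cover shows that every
   cover weighs at least [min(nk(q+1), nkq + r(k+l))].  The bound is attained
   by the circulant [q + [(i + j) mod n < r]], covered by the constant [q+1],
   and, when [n <= r(q+2)], by a matrix with entries [q+1] in the two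
   off-diagonal blocks, [q] in the lower right block and a circulant of
   entries [q'] or [q'+1] in the upper left [rk x rl] block, covered by [q+1]
   on its first [rk] rows, [q] on the others and [1] on its first [rl]
   columns. *)

Lemma sum_pred1 (T : finType) (x : T) : \sum_(y : T) (y == x) = 1.
Proof. by rewrite (bigD1 x) //= eqxx big1 // => y /negbTE->. Qed.

Section MaxTransversal.
Variables s t : nat.
Implicit Types (A : 'M[nat]_(s, t)) (u : 'I_s -> nat) (v : 'I_t -> nat).

Definition maxtrans A : nat :=
  \max_(f : {ffun 'I_s -> 'I_t} | injectiveb f) \sum_(i < s) A i (f i).

Definition covers A u v : Prop := forall i j, A i j <= u i + v j.

Lemma leq_maxtrans A (f : 'I_s -> 'I_t) :
  injective f -> \sum_i A i (f i) <= maxtrans A.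
Proof.
move=> f_inj; rewrite (eq_bigr (fun i => A i ([ffun i => f i] i))) => [|i _].
  by apply: leq_bigmax_cond; apply/injectiveP => x y; rewrite !ffunE; apply: f_inj.
by rewrite ffunE.
Qed.

Lemma maxtrans_leq_cover A u v :
  covers A u v -> maxtrans A <= \sum_i u i + \sum_j v j.
Proof.
move=> Auv; apply/bigmax_leqP => f /injectiveP f_inj.
apply: leq_trans (_ : \sum_i (u i + v (f i)) <= _); first exact: leq_sum.
rewrite big_split /= leq_add2l -(big_imset _ (in2W f_inj)) /=.
exact: (sub_le_big leqnn (fun x y => leq_addr y x)).
Qed.

Definition mxdec (D : 'I_s -> 'I_t -> bool) A : 'M[nat]_(s, t) :=
  \matrix_(i, j) (if D i j then (A i j).-1 else A i j).

Lemma leq_mxdec D A i j : A i j <= mxdec D A i j + D i j.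
Proof. by rewrite mxE; case: (D i j) => /=; lia. Qed.

Lemma sum_mxdec D A (f : 'I_s -> 'I_t) :
  \sum_r A r (f r) = \sum_r mxdec D A r (f r) + \sum_r (D r (f r) && (0 < A r (f r))).
Proof.
by rewrite -big_split; apply: eq_bigr => r _; rewrite mxE; case: (D r (f r)) => /=; lia.
Qed.

Lemma total_mxdec_lt D A :
  mxdec D A != A -> \sum_i \sum_j mxdec D A i j < \sum_i \sum_j A i j.
Proof.
have le_dec i j : mxdec D A i j <= A i j by rewrite mxE; case: ifP => // _; apply: leq_pred.
move=> neq_dec; have [i [j neq_ij]] : exists i j, mxdec D A i j != A i j.
  case: (boolP [exists i, exists j, mxdec D A i j != A i j]).
    by case/existsP=> i /existsP[j ?]; exists i, j.
  move/existsPn=> eq_dec; case/eqP: neq_dec; apply/matrixP => i j.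
  by apply/eqP; move/existsPn/(_ j): (eq_dec i); rewrite negbK.
rewrite (bigD1 i) // [ltnRHS](bigD1 i) //= -addSn leq_add ?leq_sum // => [|r _].
  rewrite (bigD1 j) // [ltnRHS](bigD1 j) //= -addSn leq_add ?leq_sum //.
  by rewrite ltn_neqAle neq_ij le_dec.
exact: leq_sum.
Qed.

Hypothesis st : s <= t.

Lemma maxtrans_attained A :
  exists2 f : 'I_s -> 'I_t, injective f & maxtrans A = \sum_i A i (f i).
Proof.
pose f0 : {ffun 'I_s -> 'I_t} := [ffun i => widen_ord st i].
have f0_inj : injectiveb f0.
  by apply/injectiveP => x y; rewrite !ffunE => /(congr1 val) /= /val_inj.
rewrite /maxtrans (bigmax_eq_arg f0) //.
by case: arg_maxnP => // f /injectiveP f_inj _; exists f.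
Qed.

Lemma injective_extension (S : {set 'I_s}) (h : 'I_s -> 'I_t) :
  {in S &, injective h} -> exists2 f : 'I_s -> 'I_t, injective f & {in S, f =1 h}.
Proof.
move=> h_inj; set sc := enum (~: S); set tc := enum (~: h @: S).
have size_sc_tc : size sc <= size tc.
  rewrite -!cardE; have := cardsC S; have := cardsC (h @: S).
  rewrite card_in_imset // !card_ord; move: #|S| #|~: S| #|~: h @: S| => a b c; lia.
have index_sc r : r \notin S -> index r sc < size tc.
  by move=> rS; apply: leq_trans size_sc_tc; rewrite index_mem mem_enum inE.
have nth_tc r : r \notin S -> nth (widen_ord st r) tc (index r sc) \notin h @: S.
  by move=> rS; rewrite -in_setC -(mem_enum (~: _)) mem_nth ?index_sc.
exists (fun r => if r \in S then h r else nth (widen_ord st r) tc (index r sc));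
  last by move=> r ->.
move=> x y; case: ifP => xS; case: ifP => yS.
- exact: h_inj.
- by move=> Exy; have := nth_tc y (negbT yS); rewrite -Exy imset_f.
- by move=> Exy; have := nth_tc x (negbT xS); rewrite Exy imset_f.
move=> Exy; rewrite -[x](nth_index x (_ : x \in sc)) ?mem_enum ?inE ?xS //.
rewrite -[y](nth_index x (_ : y \in sc)) ?mem_enum ?inE ?yS //; congr nth.
apply/eqP; rewrite -(@nth_uniq _ (widen_ord st x) tc) ?index_sc ?enum_uniq ?xS ?yS //.
by rewrite Exy (set_nth_default (widen_ord st y)) ?index_sc ?yS.
Qed.

Lemma maxtrans_support A (h : 'I_s -> 'I_t) :
  {in [pred r | 0 < A r (h r)] &, injective h} -> \sum_r A r (h r) <= maxtrans A.
Proof.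
set S := [set r | 0 < A r (h r)] => h_inj.
have [|f f_inj fh] := @injective_extension S h.
  by move=> x y; rewrite !inE; apply: h_inj.
rewrite (bigID [in S]) /= [X in _ + X]big1 => [|r]; last first.
  by rewrite inE lt0n negbK => /eqP.
rewrite addn0 (eq_bigr (fun r => A r (f r))) => [|r rS]; last by rewrite fh.
by apply: leq_trans (leq_maxtrans A f_inj); rewrite [leqRHS](bigID [in S]) leq_addr.
Qed.

Lemma maxtrans_mxdec D A : maxtrans A <= maxtrans (mxdec D A) ->
  exists2 f : 'I_s -> 'I_t, injective f &
    maxtrans A = \sum_r A r (f r) /\ forall r, D r (f r) -> A r (f r) = 0.
Proof.
have [f f_inj Ef] := maxtrans_attained (mxdec D A) => le_dec.
have := leq_maxtrans A f_inj; rewrite (sum_mxdec D) -Ef => le_A.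
exists f => //; split; first by rewrite (sum_mxdec D) -Ef; lia.
move=> r Dr; apply/eqP; rewrite -leqn0 leqNgt; apply/negP => A_pos.
suff : 0 < \sum_r' (D r' (f r') && (0 < A r' (f r'))) by lia.
by rewrite (bigD1 r) //= Dr A_pos.
Qed.

(* [P] collects the rows reachable from [i] along alternating paths: leave row
   [r] through its positive entry in column [g r], and enter the row whose
   [f]-column is [g r].  The maps [h1] and [h2] below swap [f] and [g] on [P]
   and are injective on their supports; together they carry the weight of [f]
   and [g] plus the extra entry [A i j]. *)
Section Exchange.
Variables (A : 'M[nat]_(s, t)) (f g : 'I_s -> 'I_t) (i : 'I_s) (j : 'I_t).
Hypotheses (f_inj : injective f) (g_inj : injective g).
Hypotheses (Afi0 : A i (f i) = 0) (Agj0 : forall r, g r = j -> A r j = 0).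

Let e : rel 'I_s := fun r r' => (0 < A r (g r)) && (f r' == g r).
Let P := [set r | connect e i r].

Let P_i : i \in P. Proof. by rewrite inE connect0. Qed.

Let P_closed r r' : r \in P -> 0 < A r (g r) -> f r' = g r -> r' \in P.
Proof.
rewrite !inE => Pr Ar fr'; apply: connect_trans Pr (connect1 _).
by rewrite /e Ar fr' eqxx.
Qed.

Let P_pred r : r \in P -> r != i ->
  exists2 r', 0 < A r' (g r') & f r = g r' /\ r' \in P.
Proof.
rewrite inE => /connectP [p]; elim/last_ind: p => [|p x _] /=.
  by move=> _ ->; rewrite eqxx.
rewrite rcons_path last_rcons => /andP[ip /andP[Ax /eqP fx]] -> _.
by exists (last i p) => //; split=> //; rewrite inE; apply/connectP; exists p.
Qed.

Let h1 r := if r \in P then g r else f r.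
Let h2 r := if r == i then j else if r \in P then f r else g r.

Let h1_inj : {in [pred r | 0 < A r (h1 r)] &, injective h1}.
Proof.
move=> x y; rewrite !inE /h1.
case: ifP => Px; case: ifP => Py Ax Ay Exy; [exact: g_inj | | | exact: f_inj].
- by move: Py; rewrite (P_closed Px Ax (esym Exy)).
- by move: Px; rewrite (P_closed Py Ay Exy).
Qed.

Let h2_inj : {in [pred r | 0 < A r (h2 r)] &, injective h2}.
Proof.
have f_neq_j z : z \in P -> z != i -> f z != j.
  move=> Pz zi; have [r' Ar' [-> _]] := P_pred Pz zi.
  by apply: contraTneq Ar' => gr'; rewrite gr' Agj0.
have g_neq_j z : 0 < A z (g z) -> g z != j.
  by apply: contraTneq => gz; rewrite gz Agj0.
have f_neq_g z w : z \in P -> z != i -> w \notin P -> f z != g w.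
  move=> Pz zi; have [r' _ [-> Pr']] := P_pred Pz zi.
  by apply: contraNneq => /g_inj <-.
move=> x y; rewrite !inE /h2.
case: eqVneq => [->|xi]; case: eqVneq => [->|yi] //.
- by case: ifP => Py _ Ay Ej; [move: (f_neq_j y Py yi) | move: (g_neq_j y Ay)];
    rewrite -Ej eqxx.
- by case: ifP => Px Ax _ Ej; [move: (f_neq_j x Px xi) | move: (g_neq_j x Ax)];
    rewrite Ej eqxx.
case: ifP => Px; case: ifP => Py Ax Ay Exy; [exact: f_inj | | | exact: g_inj].
- by move: (f_neq_g x y Px xi (negbT Py)); rewrite Exy eqxx.
- by move: (f_neq_g y x Py yi (negbT Px)); rewrite Exy eqxx.
Qed.

Lemma maxtrans_exchange :
  \sum_r A r (f r) + \sum_r A r (g r) + A i j <= maxtrans A + maxtrans A.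
Proof.
have weights r : A r (h1 r) + A r (h2 r) = A r (f r) + A r (g r) + (r == i) * A i j.
  rewrite /h1 /h2; case: eqVneq => [->|_]; first by rewrite P_i Afi0; lia.
  by case: ifP => _; lia.
apply: leq_trans (leq_add (maxtrans_support h1_inj) (maxtrans_support h2_inj)).
rewrite -[X in _ <= X]big_split /= (eq_bigr _ (fun r _ => weights r)).
by rewrite !big_split /= -big_distrl /= sum_pred1 mul1n.
Qed.

End Exchange.

Lemma maxtrans_mxdec_stable A :
  (forall i, maxtrans A <= maxtrans (mxdec (fun r _ => r == i) A)) ->
  (forall j, maxtrans A <= maxtrans (mxdec (fun _ c => c == j) A)) ->
  forall i j, A i j = 0.
Proof.
move=> row_stable col_stable i j.
have [f f_inj [Ef Af]] := maxtrans_mxdec (row_stable i).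
have [g g_inj [Eg Ag]] := maxtrans_mxdec (col_stable j).
have Agj0 r : g r = j -> A r j = 0 by move=> grj; rewrite -grj; apply: Ag; rewrite /= grj.
by have := maxtrans_exchange f_inj g_inj (Af i (eqxx i)) Agj0; lia.
Qed.

(* Induction on the total weight of [A]: unless [A = 0], decrementing some row
   or column lowers [maxtrans A], and the cover of the decremented matrix is
   bumped on that line. *)
Theorem egervary A :
  exists u v, covers A u v /\ \sum_i u i + \sum_j v j <= maxtrans A.
Proof.
have [N] := ubnP (\sum_i \sum_j A i j); elim: N A => // N IH A /ltnSE totA.
have IHdec D : maxtrans (mxdec D A) < maxtrans A ->
    exists u v, covers (mxdec D A) u v /\ \sum_i u i + \sum_j v j < maxtrans A.
  move=> lt_dec; have neq_dec : mxdec D A != A.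
    by apply: contraTneq lt_dec => ->; rewrite ltnn.
  have [u [v [cov le_uv]]] := IH _ (leq_trans (total_mxdec_lt neq_dec) totA).
  by exists u, v; split; last exact: leq_ltn_trans le_uv lt_dec.
case: (boolP [exists i, maxtrans (mxdec (fun r _ => r == i) A) < maxtrans A]).
  case/existsP=> i /IHdec[u [v [cov lt_uv]]].
  exists (fun r => u r + (r == i)), v; split=> [r c|].
    by have := leq_mxdec (fun r _ => r == i) A r c; have := cov r c; lia.
  by rewrite big_split /= sum_pred1 addnAC addn1.
move/existsPn=> row_stable.
case: (boolP [exists j, maxtrans (mxdec (fun _ c => c == j) A) < maxtrans A]).
  case/existsP=> j /IHdec[u [v [cov lt_uv]]].
  exists u, (fun c => v c + (c == j)); split=> [r c|].
    by have := leq_mxdec (fun _ c => c == j) A r c; have := cov r c; lia.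
  by rewrite big_split /= sum_pred1 addnA addn1.
move/existsPn=> col_stable.
exists (fun _ => 0), (fun _ => 0); split; last by rewrite !big1.
move=> i j; rewrite (maxtrans_mxdec_stable _ _ i j) // => [r|c].
  by rewrite leqNgt row_stable.
by rewrite leqNgt col_stable.
Qed.

End MaxTransversal.

Lemma sum_ord_split_ltn N a (F G : nat -> nat) : a <= N ->
  \sum_(j < N) (if j < a then F j else G j) =
  \sum_(j < a) F j + \sum_(j < N - a) G (a + j).
Proof.
move=> aN; rewrite -[in LHS](subnKC aN) big_split_ord /=.
congr (_ + _); apply: eq_bigr => j _; first by rewrite ltn_ord.
by rewrite ltnNge leq_addr.
Qed.

Lemma sum_modn_shift p c (F : nat -> nat) : 0 < p ->
  \sum_(x < p) F ((c + x) %% p) = \sum_(x < p) F x.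
Proof.
move=> p_gt0; pose sh (x : 'I_p) := Ordinal (ltn_pmod (c + x) p_gt0).
have sh_inj : injective sh.
  move=> x y /(congr1 val) /= /eqP; rewrite eqn_modDl !modn_small //.
  by move/eqP/val_inj.
by rewrite [RHS](reindex_inj sh_inj).
Qed.

Lemma sum_modn_periodic p N c (F : nat -> nat) : 0 < p ->
  \sum_(j < p * N) F ((c + j) %% p) = N * \sum_(x < p) F x.
Proof.
move=> p_gt0; elim: N => [|N IH]; first by rewrite muln0 big_ord0.
rewrite mulnS addnC big_split_ord /= IH mulSn addnC; congr (_ + _).
rewrite -(sum_modn_shift c F p_gt0); apply: eq_bigr => x _.
by rewrite addnCA [p * N]mulnC modnMDl.
Qed.

Lemma sum_modn_ltn p N c e : 0 < p -> e <= p ->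
  \sum_(j < p * N) ((c + j) %% p < e) = N * e.
Proof.
move=> p_gt0 ep; rewrite (sum_modn_periodic N c (fun x => x < e : nat)) //.
rewrite (sum_ord_split_ltn (fun=> 1) (fun=> 0) ep).
by rewrite !sum_nat_const !card_ord muln0 muln1 addn0.
Qed.

Lemma cover_weight_lower k l n q r a b U W : k <= l ->
  (q * n + r) * l <= n * l * a + W -> (q * n + r) * k <= n * k * b + U ->
  n * k * a <= U -> n * l * b <= W ->
  minn (n * k * (q + 1)) (n * k * q + r * (k + l)) <= U + W.
Proof.
move=> kl row col Ua Wb; rewrite geq_min.
have nkl c : n * k * c <= n * l * c by rewrite leq_mul2r leq_mul2l kl !orbT.
case: (leqP (q + 1) a) => qa.
  suff : n * k * (q + 1) <= n * k * a by lia.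
  by rewrite leq_mul2l qa orbT.
case: (leqP (q + 1) b) => qb.
  suff : n * k * (q + 1) <= n * k * b by have := nkl b; lia.
  by rewrite leq_mul2l qb orbT.
case: (leqP (a + b) q) => qab.
  have : n * l * (a + b) <= n * l * q by rewrite leq_mul2l qab orbT.
  by have := nkl b; nia.
have : n * k * (q + 1) <= n * k * (a + b) by rewrite leq_mul2l addn1 qab orbT.
by have := nkl b; nia.
Qed.

Lemma maxtrans_lower k l m n q r (A : 'M[nat]_(n * k, n * l)) :
  0 < k -> k <= l -> 0 < n -> m = q * n + r -> inD k l m n A ->
  minn (n * k * (q + 1)) (n * k * q + r * (k + l)) <= maxtrans A.
Proof.
move=> k_gt0 kl n_gt0 -> [rows cols].
have nkl : n * k <= n * l by rewrite leq_pmul2l.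
have [u [v [cov le_cover]]] := egervary nkl A.
apply: leq_trans le_cover.
have nk_gt0 : 0 < n * k by rewrite muln_gt0 n_gt0.
have nl_gt0 : 0 < n * l by rewrite muln_gt0 n_gt0 (leq_trans k_gt0 kl).
case: (@arg_minnP _ (Ordinal nk_gt0) xpredT u erefl) => ia _ u_min.
case: (@arg_minnP _ (Ordinal nl_gt0) xpredT v erefl) => jb _ v_min.
apply: (@cover_weight_lower k l n q r (u ia) (v jb)) => //.
- rewrite -(rows ia); apply: (@leq_trans (\sum_j (u ia + v j))); first exact: leq_sum.
  by rewrite big_split /= sum_nat_const card_ord.
- rewrite -(cols jb); apply: (@leq_trans (\sum_i (u i + v jb))); first exact: leq_sum.
  by rewrite big_split /= sum_nat_const card_ord addnC.
- have : \sum_(i < n * k) u ia <= \sum_i u i by apply: leq_sum => i _; apply: u_min.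
  by rewrite sum_nat_const card_ord.
have : \sum_(j < n * l) v jb <= \sum_j v j by apply: leq_sum => j _; apply: v_min.
by rewrite sum_nat_const card_ord.
Qed.

Lemma D_witness_circulant k l m n q r : 0 < n -> r <= n -> m = q * n + r ->
  exists2 A : 'M[nat]_(n * k, n * l), inD k l m n A & maxtrans A <= n * k * (q + 1).
Proof.
move=> n_gt0 rn ->.
exists (\matrix_(i, j) (q + ((i + j) %% n < r))%N)%R; first split=> [i|j].
- under eq_bigr do rewrite mxE.
  by rewrite big_split /= sum_nat_const card_ord sum_modn_ltn //; lia.
- under eq_bigr => i _ do rewrite mxE [i + j]addnC.
  by rewrite big_split /= sum_nat_const card_ord sum_modn_ltn //; lia.
apply: leq_trans (maxtrans_leq_cover (u := fun=> q + 1) (v := fun=> 0) _) _.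
  by move=> i j; rewrite mxE addn0 leq_add2l; case: (_ < r).
by rewrite !sum_nat_const !card_ord muln0 addn0 mulnC.
Qed.

Lemma D_witness_block k l m n q r : r < n -> m = q * n + r -> n <= r * (q + 2) ->
  exists2 A : 'M[nat]_(n * k, n * l),
    inD k l m n A & maxtrans A <= n * k * q + r * (k + l).
Proof.
move=> rn -> n_le.
have r_gt0 : 0 < r by case: r n_le rn => //; rewrite mul0n; lia.
(* Each of the first [rk] rows needs [l * d] from the corner block. *)
set d := r * (q + 2) - n; set q' := d %/ r; set e := d %% r.
have d_eq : q' * r + e + n = r * (q + 2) by rewrite -divn_eq subnK.
have e_le : e <= r by rewrite ltnW // ltn_mod.
have q'_le : q' <= q.+1 by rewrite -ltnS ltn_divLR // /d; lia.
have rk : r * k <= n * k by rewrite leq_mul2r (ltnW rn) orbT.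
have rl : r * l <= n * l by rewrite leq_mul2r (ltnW rn) orbT.
exists (\matrix_(i, j)
   (if i < r * k then if j < r * l then q' + ((i + j) %% r < e) else q.+1
    else if j < r * l then q.+1 else q)%N)%R; first split=> [i|j].
- under eq_bigr do rewrite mxE.
  case: (ltnP i (r * k)) => _.
    rewrite (sum_ord_split_ltn (fun j => q' + ((i + j) %% r < e)) (fun=> q.+1)) //.
    rewrite big_split /= sum_modn_ltn // !sum_nat_const !card_ord; nia.
  by rewrite (sum_ord_split_ltn (fun=> q.+1) (fun=> q)) // !sum_nat_const !card_ord; nia.
- under eq_bigr => i _ do rewrite mxE [i + j]addnC.
  case: (ltnP j (r * l)) => _.
    rewrite (sum_ord_split_ltn (fun i => q' + ((j + i) %% r < e)) (fun=> q.+1)) //.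
    rewrite big_split /= sum_modn_ltn // !sum_nat_const !card_ord; nia.
  by rewrite (sum_ord_split_ltn (fun=> q.+1) (fun=> q)) // !sum_nat_const !card_ord; nia.
pose u i := if i < r * k then q.+1 else q.
pose v j := if j < r * l then 1 else 0.
apply: leq_trans (maxtrans_leq_cover (u := u) (v := v) _) _.
  move=> i j; rewrite mxE /u /v.
  by have := leq_b1 ((i + j) %% r < e); case: (i < r * k); case: (j < r * l) => /=; lia.
rewrite (sum_ord_split_ltn (fun=> q.+1) (fun=> q)) //.
rewrite (sum_ord_split_ltn (fun=> 1) (fun=> 0)) // !sum_nat_const !card_ord; nia.
Qed.

Lemma is_L_maxtrans k l m n v : k <= l ->
  (exists2 A : 'M[nat]_(n * k, n * l), inD k l m n A & maxtrans A <= v) ->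
  (forall A : 'M[nat]_(n * k, n * l), inD k l m n A -> v <= maxtrans A) ->
  is_L k l m n v.
Proof.
move=> kl [A DA A_le] lower.
have tdetE (B : 'M[nat]_(n * k, n * l)) : tdet _ _ B = maxtrans B.
  by rewrite /tdet leq_mul2l kl orbT.
split; last by move=> B /lower; rewrite tdetE.
by exists A; split; rewrite // tdetE; apply/eqP; rewrite eqn_leq A_le lower.
Qed.

Theorem corollary4p3 (k l n m q r : nat) :
  0 < k -> k <= l -> coprime k l -> 1 <= n ->
  m = q * n + r -> r < n ->
  ((n <= r * (q + 2) /\ r * (k + l) <= n * k) ->
     is_L k l m n (n * k * q + r * (k + l))) /\
  (n * k <= r * (k + l) ->
     is_L k l m n (n * k * (q + 1))).
Proof.
move=> k_gt0 kl _ n_gt0 hm rn.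
have lower A : inD k l m n A -> _ := maxtrans_lower k_gt0 kl n_gt0 hm.
split=> [[n_le r_le] | r_ge]; apply: is_L_maxtrans => //.
- exact: D_witness_block.
- by move=> A /lower; apply: leq_trans; rewrite leq_min leqnn; nia.
- exact: D_witness_circulant (ltnW rn) hm.
by move=> A /lower; apply: leq_trans; rewrite leq_min leqnn; nia.
Qed.
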